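(* Let $\varepsilon>0$ and $r_c>0$, and let $\mathbf{X}=(x_1,x_2,x_3):(0,S)\times[0,T_* )\to\mathbb{R}^3$ be a smooth solution of $$\mathbf{X}_t = \frac{\mathbf{X}_s \wedge \mathbf{X}_{ss}}{|\mathbf{X}_s|^3} - \frac{\varepsilon\, x_1}{x_1^2 + r_c^2}\, \frac{\mathbf{X}_s\wedge \mathbf{e}_1 }{|\mathbf{X}_s|}$$ with $\mathbf{X}_s(s,t)\neq 0$ for all $(s,t)$. Then there is a function $L_0$ of $s$ alone (determined by the initial data) such that the modulus of the tangential vector $\mathbf{T}=\mathbf{X}_s$ satisfies $$|\mathbf{T}(s,t)| = L_0(s)\,\bigl(x_1^2(s,t) + r_c^2\bigr)^{-\varepsilon/2}\quad\text{for all }(s,t).$$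
   Context: $\mathbf{e}_1=(1,0,0)$, $\wedge$ denotes the cross product in $\mathbb{R}^3$, subscripts $s,t$ denote partial derivatives. The equation models a vortex filament $\mathbf{X}$ interacting with its mirror image in the plane $x_1=0$ (antiparallel vortex pair), with interaction strength $\varepsilon$ and regularization parameter $r_c$. *)

From Stdlib Require Import Reals.
Open Scope R_scope.

Definition vec3 : Type := (R * R * R)%type.

Definition v1 (u : vec3) : R := fst (fst u).
Definition v2 (u : vec3) : R := snd (fst u).
Definition v3 (u : vec3) : R := snd u.

Definition e1 : vec3 := (1, 0, 0).

Definition cross (u w : vec3) : vec3 :=
  (v2 u * v3 w - v3 u * v2 w,
   v3 u * v1 w - v1 u * v3 w,
   v1 u * v2 w - v2 u * v1 w).

Definition norm3 (u : vec3) : R := sqrt (v1 u ^ 2 + v2 u ^ 2 + v3 u ^ 2).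

Definition scal3 (k : R) (u : vec3) : vec3 := (k * v1 u, k * v2 u, k * v3 u).

Definition sub3 (u w : vec3) : vec3 := (v1 u - v1 w, v2 u - v2 w, v3 u - v3 w).

(** For an open interval this is the
    usual derivative; at an endpoint of a half-open interval it is the
    one-sided derivative. *)
Definition has_deriv_in (D : R -> Prop) (g : R -> R) (x l : R) : Prop :=
  forall eps : R, 0 < eps -> exists delta : R, 0 < delta /\
    forall y : R, D y -> y <> x -> Rabs (y - x) < delta ->
      Rabs ((g y - g x) / (y - x) - l) < eps.

Definition cont_on2 (U : R -> R -> Prop) (f : R -> R -> R) : Prop :=
  forall s t : R, U s t -> forall eps : R, 0 < eps -> exists delta : R, 0 < delta /\
    forall s' t' : R, U s' t' -> Rabs (s' - s) < delta -> Rabs (t' - t) < delta ->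
      Rabs (f s' t' - f s t) < eps.

Definition is_pd_s (U : R -> R -> Prop) (f g : R -> R -> R) : Prop :=
  forall s t : R, U s t -> has_deriv_in (fun s' => U s' t) (fun s' => f s' t) s (g s t).
Definition is_pd_t (U : R -> R -> Prop) (f g : R -> R -> R) : Prop :=
  forall s t : R, U s t -> has_deriv_in (fun t' => U s t') (fun t' => f s t') t (g s t).

(** C^infinity on U: f lies in a family of functions, each continuous on U,
    closed under taking both partial derivatives (so all iterated partial
    derivatives exist and are continuous on U). *)
Definition smooth_on (U : R -> R -> Prop) (f : R -> R -> R) : Prop :=
  exists F : (R -> R -> R) -> Prop, F f /\
    forall g, F g ->
      cont_on2 U g /\
      (exists gs, F gs /\ is_pd_s U g gs) /\
      (exists gt, F gt /\ is_pd_t U g gt).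

Definition comp1 (X : R -> R -> vec3) : R -> R -> R := fun s t => v1 (X s t).
Definition comp2 (X : R -> R -> vec3) : R -> R -> R := fun s t => v2 (X s t).
Definition comp3 (X : R -> R -> vec3) : R -> R -> R := fun s t => v3 (X s t).

Definition smooth3_on (U : R -> R -> Prop) (X : R -> R -> vec3) : Prop :=
  smooth_on U (comp1 X) /\ smooth_on U (comp2 X) /\ smooth_on U (comp3 X).

Definition is_pd3_s (U : R -> R -> Prop) (X Y : R -> R -> vec3) : Prop :=
  is_pd_s U (comp1 X) (comp1 Y) /\ is_pd_s U (comp2 X) (comp2 Y) /\
  is_pd_s U (comp3 X) (comp3 Y).
Definition is_pd3_t (U : R -> R -> Prop) (X Y : R -> R -> vec3) : Prop :=
  is_pd_t U (comp1 X) (comp1 Y) /\ is_pd_t U (comp2 X) (comp2 Y) /\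
  is_pd_t U (comp3 X) (comp3 Y).

Definition dom (Smax Tstar : R) : R -> R -> Prop :=
  fun s t => 0 < s < Smax /\ 0 <= t < Tstar.

From Stdlib Require Import Reals Lra.
Open Scope R_scope.

(* Along the flow X_t is orthogonal to the tangent T = X_s, so differentiating
   T . X_t = 0 in s and using X_st = X_ts gives d/dt |T|^2 = -2 X_ss . X_t.
   In X_ss . X_t only the vortex-pair term survives, and it cancels exactly
   against d/dt (x_1^2 + r_c^2)^eps, which involves only the first component
   of the binormal term.  Hence |T|^2 (x_1^2 + r_c^2)^eps is independent of t
   for 0 < t < T_star, and by continuity also at the endpoint t = 0. *)

Lemma has_deriv_in_derivable_pt_lim (D : R -> Prop) g a b x l :
  a < x < b -> (forall y, a < y < b -> D y) ->
  has_deriv_in D g x l -> derivable_pt_lim g x l.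
Proof.
  intros Hx HD H e He.
  destruct (H e He) as [d [Hd Hq]].
  assert (Hm : 0 < Rmin d (Rmin (x - a) (b - x))) by (repeat apply Rmin_glb_lt; lra).
  exists (mkposreal _ Hm); intros h Hh0 Hh; simpl in Hh.
  pose proof (Rmin_l d (Rmin (x - a) (b - x))) as Hmd.
  pose proof (Rmin_r d (Rmin (x - a) (b - x))) as Hmr.
  pose proof (Rmin_l (x - a) (b - x)); pose proof (Rmin_r (x - a) (b - x)).
  apply Rabs_def2 in Hh.
  specialize (Hq (x + h)); replace (x + h - x) with h in Hq by ring.
  apply Hq.
  - apply HD; lra.
  - lra.
  - apply Rabs_def1; lra.
Qed.

Lemma is_pd_s_dom_derivable S Tstar f g s t :
  is_pd_s (dom S Tstar) f g -> dom S Tstar s t ->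
  derivable_pt_lim (fun x => f x t) s (g s t).
Proof.
  intros H [Hs Ht].
  apply (has_deriv_in_derivable_pt_lim (fun y => dom S Tstar y t) _ 0 S);
    [lra | | exact (H s t (conj Hs Ht))].
  intros y Hy; split; lra.
Qed.

Lemma is_pd_t_dom_derivable S Tstar f g s t :
  is_pd_t (dom S Tstar) f g -> 0 < s < S -> 0 < t < Tstar ->
  derivable_pt_lim (fun y => f s y) t (g s t).
Proof.
  intros H Hs Ht.
  apply (has_deriv_in_derivable_pt_lim (fun y => dom S Tstar s y) _ 0 Tstar);
    [lra | | apply H; split; lra].
  intros y Hy; split; lra.
Qed.

Lemma continuity_pt_ball f x :
  continuity_pt f x <->
  forall e, 0 < e -> exists d, 0 < d /\
    forall y, Rabs (y - x) < d -> Rabs (f y - f x) < e.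
Proof.
  split.
  - intros H e He; destruct (H e He) as [d [Hd K]]; exists d; split; [exact Hd |].
    intros y Hy; destruct (Req_dec x y) as [<- | Hxy].
    + rewrite Rminus_diag, Rabs_R0; exact He.
    + apply (K y); repeat split; assumption.
  - intros H e He; destruct (H e He) as [d [Hd K]]; exists d; split; [exact Hd |].
    intros y [_ Hy]; apply K, Hy.
Qed.

(* Precomposing with Rmax 0 expresses right-continuity at the endpoint 0 of
   [0, b) as ordinary two-sided continuity. *)
Lemma eq_of_derive0_Rmax0 (G : R -> R) b t :
  0 <= t < b -> continuity_pt (fun y => G (Rmax 0 y)) 0 ->
  (forall y, 0 < y < b -> derivable_pt_lim G y 0) -> G t = G 0.
Proof.
  intros Ht HC HD.
  destruct (Req_dec t 0) as [-> | Ht0]; [reflexivity |].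
  assert (Hconst : forall y, 0 < y <= t -> G y = G t).
  { intros y Hy; destruct (Req_dec y t) as [-> | Hyt]; [reflexivity |].
    destruct (MVT_cor2 G (fun _ => 0) y t) as [c [Ec _]]; [lra | | lra].
    intros c Hc; apply HD; lra. }
  apply cond_eq; intros e He.
  destruct (proj1 (continuity_pt_ball _ _) HC e He) as [d [Hd K]].
  set (z := Rmin (d / 2) t).
  assert (Hz : 0 < z <= t) by (split; [apply Rmin_glb_lt | apply Rmin_r]; lra).
  assert (Hzd : z <= d / 2) by apply Rmin_l.
  specialize (K z); rewrite (Rmax_right 0 z), Rmax_left, Hconst in K by lra.
  apply K; rewrite Rminus_0_r, Rabs_right; lra.
Qed.

Lemma double_difference_mvt (f fs fst : R -> R -> R) s0 t0 h :
  0 < h ->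
  (forall s t, s0 <= s <= s0 + h -> t0 <= t <= t0 + h ->
     derivable_pt_lim (fun x => f x t) s (fs s t)) ->
  (forall s t, s0 <= s <= s0 + h -> t0 <= t <= t0 + h ->
     derivable_pt_lim (fun y => fs s y) t (fst s t)) ->
  exists s1 t1, s0 < s1 < s0 + h /\ t0 < t1 < t0 + h /\
    f (s0 + h) (t0 + h) - f s0 (t0 + h) - f (s0 + h) t0 + f s0 t0 = h * h * fst s1 t1.
Proof.
  intros Hh Hs Hst.
  destruct (MVT_cor2 (fun x => f x (t0 + h) - f x t0) (fun x => fs x (t0 + h) - fs x t0)
              s0 (s0 + h)) as [s1 [E1 Hs1]]; [lra | |].
  { intros x Hx.
    exact (derivable_pt_lim_minus _ _ _ _ _
             (Hs x (t0 + h) Hx ltac:(lra)) (Hs x t0 Hx ltac:(lra))). }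
  destruct (MVT_cor2 (fun y => fs s1 y) (fun y => fst s1 y) t0 (t0 + h)) as [t1 [E2 Ht1]];
    [lra | intros y Hy; apply Hst; lra |].
  exists s1, t1; split; [exact Hs1 | split; [exact Ht1 |]].
  rewrite E2 in E1; replace (t0 + h - t0) with h in E1 by ring.
  replace (s0 + h - s0) with h in E1 by ring.
  lra.
Qed.

Definition corner_square (s0 t0 r : R) : R -> R -> Prop :=
  fun s t => s0 <= s <= s0 + r /\ t0 <= t <= t0 + r.

Lemma cont_on2_subset (U V : R -> R -> Prop) f :
  (forall s t, V s t -> U s t) -> cont_on2 U f -> cont_on2 V f.
Proof.
  intros HVU H s t Hst e He; destruct (H s t (HVU s t Hst) e He) as [d [Hd K]].
  exists d; split; [exact Hd |]; intros s' t' H'; apply K, HVU, H'.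
Qed.

Lemma cont_on2_ext (U : R -> R -> Prop) f g :
  (forall s t, U s t -> f s t = g s t) -> cont_on2 U f -> cont_on2 U g.
Proof.
  intros E H s t Hst e He; destruct (H s t Hst e He) as [d [Hd K]].
  exists d; split; [exact Hd |]; intros s' t' H'.
  rewrite <- (E s t Hst), <- (E s' t' H'); apply K, H'.
Qed.

(* Clairaut–Schwarz: one double difference over a small square is computed
   by the mean value theorem in either order of differentiation. *)
Lemma mixed_partials_eq (f fs ft fst fts : R -> R -> R) s0 t0 r :
  0 < r ->
  (forall s t, corner_square s0 t0 r s t -> derivable_pt_lim (fun x => f x t) s (fs s t)) ->
  (forall s t, corner_square s0 t0 r s t -> derivable_pt_lim (fun y => fs s y) t (fst s t)) ->
  (forall s t, corner_square s0 t0 r s t -> derivable_pt_lim (fun y => f s y) t (ft s t)) ->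
  (forall s t, corner_square s0 t0 r s t -> derivable_pt_lim (fun x => ft x t) s (fts s t)) ->
  cont_on2 (corner_square s0 t0 r) fst -> cont_on2 (corner_square s0 t0 r) fts ->
  fst s0 t0 = fts s0 t0.
Proof.
  intros Hr Hs Hst Ht Hts Cst Cts.
  assert (Hc : corner_square s0 t0 r s0 t0) by (unfold corner_square; lra).
  apply cond_eq; intros e He.
  destruct (Cst s0 t0 Hc (e / 2)) as [d1 [Hd1 K1]]; [lra |].
  destruct (Cts s0 t0 Hc (e / 2)) as [d2 [Hd2 K2]]; [lra |].
  set (h := Rmin r (Rmin d1 d2) / 2).
  assert (Hh : 0 < h).
  { assert (0 < Rmin r (Rmin d1 d2)) by (repeat apply Rmin_glb_lt; lra); unfold h; lra. }
  assert (Hhr : h < r /\ h < d1 /\ h < d2).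
  { pose proof (Rmin_l r (Rmin d1 d2)); pose proof (Rmin_r r (Rmin d1 d2)).
    pose proof (Rmin_l d1 d2); pose proof (Rmin_r d1 d2); unfold h; lra. }
  destruct (double_difference_mvt f fs fst s0 t0 h Hh) as [s1 [t1 [Hs1 [Ht1 E1]]]];
    [intros; apply Hs; red; lra | intros; apply Hst; red; lra |].
  destruct (double_difference_mvt (fun t s => f s t) (fun t s => ft s t) (fun t s => fts s t)
              t0 s0 h Hh) as [t2 [s2 [Ht2 [Hs2 E2]]]];
    [intros; apply Ht; red; lra | intros; apply Hts; red; lra |].
  assert (E : fst s1 t1 = fts s2 t2).
  { apply (Rmult_eq_reg_l (h * h)); [cbv beta in E2; lra | apply Rgt_not_eq; nra]. }
  assert (A1 : Rabs (fst s1 t1 - fst s0 t0) < e / 2)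
    by (apply K1; [red; lra | apply Rabs_def1 | apply Rabs_def1]; lra).
  assert (A2 : Rabs (fts s2 t2 - fts s0 t0) < e / 2)
    by (apply K2; [red; lra | apply Rabs_def1 | apply Rabs_def1]; lra).
  rewrite E in A1; apply Rabs_def2 in A1, A2; apply Rabs_def1; lra.
Qed.

Lemma smooth_on_cont (U : R -> R -> Prop) f : smooth_on U f -> cont_on2 U f.
Proof. intros [F [Ff HF]]; exact (proj1 (HF f Ff)). Qed.

Lemma smooth_on_pd_s_cont S Tstar f fs :
  smooth_on (dom S Tstar) f -> is_pd_s (dom S Tstar) f fs -> cont_on2 (dom S Tstar) fs.
Proof.
  intros [F [Ff HF]] Hfs.
  destruct (HF f Ff) as [_ [[gs [Fgs Hgs]] _]].
  apply (cont_on2_ext _ gs); [| exact (proj1 (HF gs Fgs))].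
  intros s t Hst; apply (uniqueness_limite (fun x => f x t) s);
    eapply is_pd_s_dom_derivable; eassumption.
Qed.

Lemma smooth_on_mixed_partial S Tstar f fs ft s t :
  smooth_on (dom S Tstar) f -> is_pd_s (dom S Tstar) f fs -> is_pd_t (dom S Tstar) f ft ->
  0 < s < S -> 0 < t < Tstar ->
  exists w, derivable_pt_lim (fun y => fs s y) t w /\ derivable_pt_lim (fun x => ft x t) s w.
Proof.
  intros [F [Ff HF]] Hfs Hft Hs Ht.
  destruct (HF f Ff) as [_ [[gs [Fgs Hgs]] [gt [Fgt Hgt]]]].
  destruct (HF gs Fgs) as [_ [_ [gst [Fgst Hgst]]]].
  destruct (HF gt Fgt) as [_ [[gts [Fgts Hgts]] _]].
  pose proof (proj1 (HF gst Fgst)) as Cgst; pose proof (proj1 (HF gts Fgts)) as Cgts.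
  assert (Egs : forall s' t', dom S Tstar s' t' -> gs s' t' = fs s' t').
  { intros s' t' H'; apply (uniqueness_limite (fun x => f x t') s');
      eapply is_pd_s_dom_derivable; eassumption. }
  assert (Egt : forall s' t', 0 < s' < S -> 0 < t' < Tstar -> gt s' t' = ft s' t').
  { intros s' t' Hs' Ht'; apply (uniqueness_limite (fun y => f s' y) t');
      eapply is_pd_t_dom_derivable; eassumption. }
  set (r := Rmin (S - s) (Tstar - t) / 2).
  assert (Hr : 0 < r /\ s + r < S /\ t + r < Tstar).
  { pose proof (Rmin_l (S - s) (Tstar - t)); pose proof (Rmin_r (S - s) (Tstar - t)).
    assert (0 < Rmin (S - s) (Tstar - t)) by (apply Rmin_glb_lt; lra); unfold r; lra. }
  assert (Hsq : forall s' t', corner_square s t r s' t' -> 0 < s' < S /\ 0 < t' < Tstar)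
    by (unfold corner_square; intros; lra).
  assert (Hsw : gst s t = gts s t).
  { assert (Hdom : forall s' t', corner_square s t r s' t' -> dom S Tstar s' t')
      by (intros s' t' H'; destruct (Hsq s' t' H'); split; lra).
    apply (mixed_partials_eq f gs gt gst gts s t r); [lra | ..].
    - intros s' t' H'; exact (is_pd_s_dom_derivable _ _ _ _ _ _ Hgs (Hdom _ _ H')).
    - intros s' t' H'; destruct (Hsq s' t' H') as [Hs' Ht'].
      exact (is_pd_t_dom_derivable _ _ _ _ _ _ Hgst Hs' Ht').
    - intros s' t' H'; destruct (Hsq s' t' H') as [Hs' Ht'].
      exact (is_pd_t_dom_derivable _ _ _ _ _ _ Hgt Hs' Ht').
    - intros s' t' H'; exact (is_pd_s_dom_derivable _ _ _ _ _ _ Hgts (Hdom _ _ H')).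
    - exact (cont_on2_subset _ _ _ Hdom Cgst).
    - exact (cont_on2_subset _ _ _ Hdom Cgts). }
  exists (gst s t); split.
  - apply (derivable_pt_lim_locally_ext (fun y => gs s y) _ t 0 Tstar); [lra | |].
    + intros y Hy; apply Egs; split; lra.
    + eapply is_pd_t_dom_derivable; eassumption.
  - rewrite Hsw; apply (derivable_pt_lim_locally_ext (fun x => gt x t) _ s 0 S); [lra | |].
    + intros x Hx; apply Egt; lra.
    + eapply is_pd_s_dom_derivable; [eassumption | split; lra].
Qed.

Definition dot3 (u w : vec3) : R := v1 u * v1 w + v2 u * v2 w + v3 u * v3 w.

Definition derivable3_pt_lim (u : R -> vec3) (x : R) (l : vec3) : Prop :=
  derivable_pt_lim (fun z => v1 (u z)) x (v1 l) /\
  derivable_pt_lim (fun z => v2 (u z)) x (v2 l) /\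
  derivable_pt_lim (fun z => v3 (u z)) x (v3 l).

Definition continuity3_pt (u : R -> vec3) (x : R) : Prop :=
  continuity_pt (fun z => v1 (u z)) x /\
  continuity_pt (fun z => v2 (u z)) x /\
  continuity_pt (fun z => v3 (u z)) x.

Lemma is_pd3_s_dom_derivable3 S Tstar X Y s t :
  is_pd3_s (dom S Tstar) X Y -> dom S Tstar s t ->
  derivable3_pt_lim (fun x => X x t) s (Y s t).
Proof.
  intros [H1 [H2 H3]] Hst.
  split; [| split].
  - exact (is_pd_s_dom_derivable _ _ _ _ _ _ H1 Hst).
  - exact (is_pd_s_dom_derivable _ _ _ _ _ _ H2 Hst).
  - exact (is_pd_s_dom_derivable _ _ _ _ _ _ H3 Hst).
Qed.

Lemma smooth3_on_mixed_partial S Tstar X Xs Xt s t :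
  smooth3_on (dom S Tstar) X -> is_pd3_s (dom S Tstar) X Xs -> is_pd3_t (dom S Tstar) X Xt ->
  0 < s < S -> 0 < t < Tstar ->
  exists w, derivable3_pt_lim (fun y => Xs s y) t w /\ derivable3_pt_lim (fun x => Xt x t) s w.
Proof.
  intros [Sm1 [Sm2 Sm3]] [Hs1 [Hs2 Hs3]] [Ht1 [Ht2 Ht3]] Hs Ht.
  destruct (smooth_on_mixed_partial _ _ _ _ _ s t Sm1 Hs1 Ht1 Hs Ht) as [w1 [A1 B1]].
  destruct (smooth_on_mixed_partial _ _ _ _ _ s t Sm2 Hs2 Ht2 Hs Ht) as [w2 [A2 B2]].
  destruct (smooth_on_mixed_partial _ _ _ _ _ s t Sm3 Hs3 Ht3 Hs Ht) as [w3 [A3 B3]].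
  exists (w1, w2, w3); repeat split; assumption.
Qed.

Lemma derivable_pt_lim_dot3 u w x a b :
  derivable3_pt_lim u x a -> derivable3_pt_lim w x b ->
  derivable_pt_lim (fun z => dot3 (u z) (w z)) x (dot3 a (w x) + dot3 (u x) b).
Proof.
  intros [A1 [A2 A3]] [B1 [B2 B3]].
  replace (dot3 a (w x) + dot3 (u x) b) with
    (v1 a * v1 (w x) + v1 (u x) * v1 b + (v2 a * v2 (w x) + v2 (u x) * v2 b)
     + (v3 a * v3 (w x) + v3 (u x) * v3 b)) by (unfold dot3; ring).
  exact (derivable_pt_lim_plus _ _ _ _ _
           (derivable_pt_lim_plus _ _ _ _ _ (derivable_pt_lim_mult _ _ _ _ _ A1 B1)
              (derivable_pt_lim_mult _ _ _ _ _ A2 B2))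
           (derivable_pt_lim_mult _ _ _ _ _ A3 B3)).
Qed.

Lemma dot3_orthogonal_deriv u w x a b c d :
  c < x < d -> (forall z, c < z < d -> dot3 (u z) (w z) = 0) ->
  derivable3_pt_lim u x a -> derivable3_pt_lim w x b ->
  dot3 a (w x) + dot3 (u x) b = 0.
Proof.
  intros Hx H0 Hu Hw.
  apply (uniqueness_limite (fun z => dot3 (u z) (w z)) x);
    [exact (derivable_pt_lim_dot3 _ _ _ _ _ Hu Hw) |].
  apply (derivable_pt_lim_locally_ext (fun _ => 0) _ x c d _ Hx);
    [intros z Hz; symmetry; exact (H0 z Hz) | apply derivable_pt_lim_const].
Qed.

Lemma sq_add_sq_pos x rc : rc <> 0 -> 0 < x ^ 2 + rc ^ 2.
Proof. intros Hrc; pose proof (Rsqr_pos_lt rc Hrc); unfold Rsqr in *; nra. Qed.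

Lemma Rpower_pos x y : 0 < Rpower x y.
Proof. apply exp_pos. Qed.

Definition filament_velocity (eps rc x : R) (T Y : vec3) : vec3 :=
  sub3 (scal3 (/ (norm3 T ^ 3)) (cross T Y))
       (scal3 (eps * x / (x ^ 2 + rc ^ 2) / norm3 T) (cross T e1)).

Definition energy (eps rc : R) (T : vec3) (x : R) : R :=
  dot3 T T * Rpower (x ^ 2 + rc ^ 2) eps.

Lemma dot3_self_norm3 T : dot3 T T = norm3 T ^ 2.
Proof.
  unfold norm3; rewrite pow2_sqrt; [unfold dot3; ring |].
  pose proof (pow2_ge_0 (v1 T)); pose proof (pow2_ge_0 (v2 T)); pose proof (pow2_ge_0 (v3 T)); lra.
Qed.

Lemma norm3_neq0 T : T <> (0, 0, 0) -> norm3 T <> 0.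
Proof.
  intros HT Hn; apply HT.
  assert (H0 : dot3 T T = 0) by (rewrite dot3_self_norm3, Hn; ring).
  destruct T as [[t1 t2] t3]; unfold dot3, v1, v2, v3 in H0; simpl in H0.
  repeat f_equal; nra.
Qed.

Lemma dot3_velocity_tangent eps rc x T Y : dot3 T (filament_velocity eps rc x T Y) = 0.
Proof.
  destruct T as [[t1 t2] t3], Y as [[y1 y2] y3].
  unfold filament_velocity, dot3, sub3, scal3, cross, e1, v1, v2, v3; simpl; ring.
Qed.

(* Both sides are multiples of Y . (T x e1): the binormal term drops out of
   Y . V, and T x e1 has no first component. *)
Lemma velocity_energy_balance eps rc x T Y :
  T <> (0, 0, 0) -> rc <> 0 ->
  (x ^ 2 + rc ^ 2) * dot3 Y (filament_velocity eps rc x T Y) =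
  eps * dot3 T T * x * v1 (filament_velocity eps rc x T Y).
Proof.
  intros HT Hrc.
  pose proof (norm3_neq0 T HT) as Hn; pose proof (sq_add_sq_pos x rc Hrc) as HQ.
  rewrite dot3_self_norm3; unfold filament_velocity.
  generalize (norm3 T) Hn; intros n Hn'.
  destruct T as [[t1 t2] t3], Y as [[y1 y2] y3].
  unfold dot3, sub3, scal3, cross, e1, v1, v2, v3; simpl.
  field; lra.
Qed.

Lemma energy_rate_velocity eps rc x T Y W :
  T <> (0, 0, 0) -> rc <> 0 ->
  dot3 Y (filament_velocity eps rc x T Y) + dot3 T W = 0 ->
  2 * dot3 T W * Rpower (x ^ 2 + rc ^ 2) eps +
  dot3 T T * (eps * Rpower (x ^ 2 + rc ^ 2) eps / (x ^ 2 + rc ^ 2)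
              * (2 * x * v1 (filament_velocity eps rc x T Y))) = 0.
Proof.
  intros HT Hrc Horth.
  pose proof (velocity_energy_balance eps rc x T Y HT Hrc) as Hbal.
  pose proof (sq_add_sq_pos x rc Hrc) as HQ.
  set (V := filament_velocity eps rc x T Y) in *.
  set (P := Rpower (x ^ 2 + rc ^ 2) eps).
  replace (dot3 T T * (eps * P / (x ^ 2 + rc ^ 2) * (2 * x * v1 V)))
    with (2 * P / (x ^ 2 + rc ^ 2) * (eps * dot3 T T * x * v1 V)) by (field; lra).
  rewrite <- Hbal; replace (dot3 T W) with (- dot3 Y V) by lra.
  field; lra.
Qed.

Lemma derivable_pt_lim_sq_add_sq p x b rc :
  derivable_pt_lim p x b -> derivable_pt_lim (fun z => p z ^ 2 + rc ^ 2) x (2 * p x * b).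
Proof.
  intros Hp.
  apply (derivable_pt_lim_ext (fun z => p z * p z + rc ^ 2)); [intros; ring |].
  replace (2 * p x * b) with (b * p x + p x * b + 0) by ring.
  exact (derivable_pt_lim_plus _ _ _ _ _ (derivable_pt_lim_mult _ _ _ _ _ Hp Hp)
           (derivable_pt_lim_const _ _)).
Qed.

Lemma derivable_pt_lim_energy eps rc u p x a b :
  rc <> 0 -> derivable3_pt_lim u x a -> derivable_pt_lim p x b ->
  derivable_pt_lim (fun z => energy eps rc (u z) (p z)) x
    (2 * dot3 (u x) a * Rpower (p x ^ 2 + rc ^ 2) eps +
     dot3 (u x) (u x) * (eps * Rpower (p x ^ 2 + rc ^ 2) eps / (p x ^ 2 + rc ^ 2)
                         * (2 * p x * b))).
Proof.
  intros Hrc Hu Hp.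
  pose proof (sq_add_sq_pos (p x) rc Hrc) as HQ.
  pose proof (derivable_pt_lim_comp _ _ _ _ _ (derivable_pt_lim_sq_add_sq p x b rc Hp)
                (derivable_pt_lim_power _ eps HQ)) as DR.
  pose proof (derivable_pt_lim_mult _ _ _ _ _ (derivable_pt_lim_dot3 u u x a a Hu Hu) DR) as DE.
  assert (Hpow : Rpower (p x ^ 2 + rc ^ 2) (eps - 1) =
                 Rpower (p x ^ 2 + rc ^ 2) eps / (p x ^ 2 + rc ^ 2)).
  { unfold Rminus, Rdiv; rewrite Rpower_plus, Rpower_Ropp, Rpower_1 by exact HQ; reflexivity. }
  rewrite Hpow in DE; cbv beta in DE.
  replace (dot3 a (u x)) with (dot3 (u x) a) in DE by (unfold dot3; ring).
  replace (2 * dot3 (u x) a * Rpower (p x ^ 2 + rc ^ 2) eps +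
           dot3 (u x) (u x) * (eps * Rpower (p x ^ 2 + rc ^ 2) eps / (p x ^ 2 + rc ^ 2)
                               * (2 * p x * b)))
    with ((dot3 (u x) a + dot3 (u x) a) * Rpower (p x ^ 2 + rc ^ 2) eps +
          dot3 (u x) (u x) * (eps * (Rpower (p x ^ 2 + rc ^ 2) eps / (p x ^ 2 + rc ^ 2))
                              * (2 * p x * b))) by (unfold Rdiv; ring).
  exact DE.
Qed.

Lemma continuity_pt_energy eps rc u p x :
  rc <> 0 -> continuity3_pt u x -> continuity_pt p x ->
  continuity_pt (fun z => energy eps rc (u z) (p z)) x.
Proof.
  intros Hrc [C1 [C2 C3]] Cp.
  pose proof (sq_add_sq_pos (p x) rc Hrc) as HQ.
  assert (CQ : continuity_pt (fun z => p z ^ 2 + rc ^ 2) x).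
  { apply (continuity_pt_locally_ext (fun z => p z * p z + rc ^ 2) _ 1); [lra | intros; ring |].
    exact (continuity_pt_plus _ _ _ (continuity_pt_mult _ _ _ Cp Cp)
             (continuity_pt_const (fct_cte (rc ^ 2)) x (fun _ _ => eq_refl))). }
  assert (CP : continuity_pt (fun y => Rpower y eps) (p x ^ 2 + rc ^ 2))
    by exact (derivable_continuous_pt _ _ (exist _ _ (derivable_pt_lim_power _ eps HQ))).
  exact (continuity_pt_mult _ _ _
           (continuity_pt_plus _ _ _
              (continuity_pt_plus _ _ _ (continuity_pt_mult _ _ _ C1 C1)
                 (continuity_pt_mult _ _ _ C2 C2))
              (continuity_pt_mult _ _ _ C3 C3))
           (continuity_pt_comp _ _ _ CQ CP)).
Qed.

Lemma energy_sqrt eps rc T x :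
  rc <> 0 -> sqrt (energy eps rc T x) = norm3 T * Rpower (x ^ 2 + rc ^ 2) (eps / 2).
Proof.
  intros Hrc; pose proof (sq_add_sq_pos x rc Hrc) as HQ.
  unfold energy; rewrite dot3_self_norm3.
  replace eps with (eps / 2 + eps / 2) at 1 by field.
  rewrite Rpower_plus.
  replace (norm3 T ^ 2 * (Rpower (x ^ 2 + rc ^ 2) (eps / 2) * Rpower (x ^ 2 + rc ^ 2) (eps / 2)))
    with ((norm3 T * Rpower (x ^ 2 + rc ^ 2) (eps / 2)) ^ 2) by ring.
  apply sqrt_pow2.
  apply Rmult_le_pos; [apply sqrt_pos | left; apply Rpower_pos].
Qed.

Lemma norm3_of_energy_eq eps rc T0 T1 x0 x1 :
  rc <> 0 -> energy eps rc T1 x1 = energy eps rc T0 x0 ->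
  norm3 T1 = norm3 T0 * Rpower (x0 ^ 2 + rc ^ 2) (eps / 2) * Rpower (x1 ^ 2 + rc ^ 2) (- (eps / 2)).
Proof.
  intros Hrc E; apply (f_equal sqrt) in E; rewrite !energy_sqrt in E by exact Hrc.
  rewrite Rpower_Ropp, <- E.
  pose proof (Rpower_pos (x1 ^ 2 + rc ^ 2) (eps / 2)); field; lra.
Qed.

Lemma cont_on2_dom_Rmax0 S Tstar g s :
  cont_on2 (dom S Tstar) g -> 0 < s < S -> 0 < Tstar ->
  continuity_pt (fun y => g s (Rmax 0 y)) 0.
Proof.
  intros C Hs HT; apply continuity_pt_ball; intros e He.
  destruct (C s 0 ltac:(split; lra) e He) as [d [Hd K]].
  exists (Rmin d Tstar); split; [apply Rmin_glb_lt; lra |].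
  intros y Hy; pose proof (Rmin_l d Tstar); pose proof (Rmin_r d Tstar).
  rewrite (Rmax_left 0 0) by lra; rewrite Rminus_0_r in Hy.
  assert (Hmax : 0 <= Rmax 0 y <= Rabs y).
  { unfold Rmax, Rabs; destruct Rle_dec; destruct Rcase_abs; lra. }
  apply K; [split; lra | rewrite Rminus_diag, Rabs_R0; lra | rewrite Rminus_0_r, Rabs_right; lra].
Qed.

Section FilamentEnergy.

Variables (eps rc S Tstar : R) (X Xs Xss Xt : R -> R -> vec3).
Hypothesis hrc : rc <> 0.
Hypothesis hsmooth : smooth3_on (dom S Tstar) X.
Hypothesis hXs : is_pd3_s (dom S Tstar) X Xs.
Hypothesis hXss : is_pd3_s (dom S Tstar) Xs Xss.
Hypothesis hXt : is_pd3_t (dom S Tstar) X Xt.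
Hypothesis hnz : forall s t, dom S Tstar s t -> Xs s t <> (0, 0, 0).
Hypothesis heq : forall s t, dom S Tstar s t ->
  Xt s t = filament_velocity eps rc (v1 (X s t)) (Xs s t) (Xss s t).

(* Differentiating X_s . X_t = 0 in s turns the t-derivative of X_s,
   i.e. the s-derivative of X_t, into -X_ss . X_t. *)
Lemma filament_energy_stationary s t :
  0 < s < S -> 0 < t < Tstar ->
  derivable_pt_lim (fun y => energy eps rc (Xs s y) (v1 (X s y))) t 0.
Proof.
  intros Hs Ht.
  assert (Hst : dom S Tstar s t) by (split; lra).
  destruct (smooth3_on_mixed_partial _ _ _ _ _ s t hsmooth hXs hXt Hs Ht) as [W [HWt HWs]].
  assert (Horth : dot3 (Xss s t) (Xt s t) + dot3 (Xs s t) W = 0).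
  { apply (dot3_orthogonal_deriv (fun x => Xs x t) (fun x => Xt x t) s _ _ 0 S);
      [lra | | exact (is_pd3_s_dom_derivable3 _ _ _ _ _ _ hXss Hst) | exact HWs].
    intros x Hx; rewrite heq by (split; lra); apply dot3_velocity_tangent. }
  assert (Hx1 : derivable_pt_lim (fun y => v1 (X s y)) t (v1 (Xt s t)))
    by exact (is_pd_t_dom_derivable _ _ _ _ _ _ (proj1 hXt) Hs Ht).
  pose proof (derivable_pt_lim_energy eps rc _ _ t _ _ hrc HWt Hx1) as D; cbv beta in D.
  rewrite (heq s t Hst) in D, Horth.
  rewrite (energy_rate_velocity eps rc _ _ _ W (hnz s t Hst) hrc Horth) in D.
  exact D.
Qed.

Lemma filament_energy_continuous_at_0 s :
  0 < s < S -> 0 < Tstar ->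
  continuity_pt (fun y => energy eps rc (Xs s (Rmax 0 y)) (v1 (X s (Rmax 0 y)))) 0.
Proof.
  intros Hs HT.
  destruct hsmooth as [Sm1 [Sm2 Sm3]]; destruct hXs as [P1 [P2 P3]].
  apply continuity_pt_energy; [exact hrc | split; [| split] |].
  - exact (cont_on2_dom_Rmax0 _ _ _ s (smooth_on_pd_s_cont _ _ _ _ Sm1 P1) Hs HT).
  - exact (cont_on2_dom_Rmax0 _ _ _ s (smooth_on_pd_s_cont _ _ _ _ Sm2 P2) Hs HT).
  - exact (cont_on2_dom_Rmax0 _ _ _ s (smooth_on_pd_s_cont _ _ _ _ Sm3 P3) Hs HT).
  - exact (cont_on2_dom_Rmax0 _ _ _ s (smooth_on_cont _ _ Sm1) Hs HT).
Qed.

End FilamentEnergy.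

Theorem mainTheorem1
  (eps rc S Tstar : R) (heps : 0 < eps) (hrc : 0 < rc)
  (X Xs Xss Xt : R -> R -> vec3)
  (hsmooth : smooth3_on (dom S Tstar) X)
  (hXs : is_pd3_s (dom S Tstar) X Xs)
  (hXss : is_pd3_s (dom S Tstar) Xs Xss)
  (hXt : is_pd3_t (dom S Tstar) X Xt)
  (hnz : forall s t, dom S Tstar s t -> Xs s t <> (0, 0, 0))
  (heq : forall s t, dom S Tstar s t ->
     Xt s t =
       sub3 (scal3 (/ (norm3 (Xs s t) ^ 3)) (cross (Xs s t) (Xss s t)))
            (scal3 (eps * v1 (X s t) / (v1 (X s t) ^ 2 + rc ^ 2) / norm3 (Xs s t))
                   (cross (Xs s t) e1))) :
  exists L0 : R -> R,
    (forall s, 0 < s < S ->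
       L0 s = norm3 (Xs s 0) * Rpower (v1 (X s 0) ^ 2 + rc ^ 2) (eps / 2)) /\
    (forall s t, dom S Tstar s t ->
       norm3 (Xs s t) = L0 s * Rpower (v1 (X s t) ^ 2 + rc ^ 2) (- (eps / 2))).
Proof.
  assert (Hrc : rc <> 0) by lra.
  exists (fun s => norm3 (Xs s 0) * Rpower (v1 (X s 0) ^ 2 + rc ^ 2) (eps / 2)).
  split; [intros s _; reflexivity |].
  intros s t [Hs Ht]; cbv beta.
  apply norm3_of_energy_eq; [exact Hrc |].
  apply (eq_of_derive0_Rmax0 (fun y => energy eps rc (Xs s y) (v1 (X s y))) Tstar);
    [exact Ht | apply (filament_energy_continuous_at_0 _ _ S Tstar _ _ Hrc hsmooth hXs); lra |].
  intros y Hy; exact (filament_energy_stationary eps rc S Tstar X Xs Xss Xt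
                        Hrc hsmooth hXs hXss hXt hnz heq s y Hs Hy).
Qed.
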